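(* Let $A$ be a finite alphabet with $|A|=k$, and let $L\subseteq A^*$ be $n$-PT. Let $m=f_k(n)$. Then $I(L)$ is $(m+1)$-PT.
   Context: For words $u,v$, $u\sqsubseteq v$ (subword) means $u=a_1\cdots a_\ell$ with letters $a_i$ and $v=v_0a_1v_1\cdots a_\ell v_\ell$ for some words $v_i$. $u\perp v$ means $u\not\sqsubseteq v$ and $v\not\sqsubseteq u$. $I(L)=\{u\in A^*~|~\exists v\in L: u\perp v\}$. For $n\in\mathbb{N}$, $u\sim_n v$ iff $u$ and $v$ have exactly the same subwords of length at most $n$; $L$ is $n$-PT if it is a union of $\sim_n$-classes. The functions $f_k:\mathbb{N}\to\mathbb{N}$ ($k\geq1$) are defined by $f_1(n)=n$ and $f_{k+1}(n)=\max_{0\leq m\leq n}\bigl(m f_k(n+1-m)+m+f_k(n-m)\bigr)$. *)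

From mathcomp Require Import all_boot.
Set Implicit Arguments. Unset Strict Implicit. Unset Printing Implicit Defensive.

Definition subword (A : eqType) (u v : seq A) : bool := subseq u v.

Definition incomparable (A : eqType) (u v : seq A) : Prop :=
  ~~ subword u v /\ ~~ subword v u.

Definition Iset (A : eqType) (L : seq A -> Prop) : seq A -> Prop :=
  fun u => exists v, L v /\ incomparable u v.

Definition simn (A : eqType) (n : nat) (u v : seq A) : Prop :=
  forall w : seq A, size w <= n -> subword w u = subword w v.

Definition nPT (A : eqType) (n : nat) (L : seq A -> Prop) : Prop :=
  forall u v : seq A, simn n u v -> (L u <-> L v).

(* fF j = f_{j+1}:  fF 0 n = n,
   fF (j+1) n = max_{0<=m<=n} (m * fF j (n+1-m) + m + fF j (n-m)) *)
Fixpoint fF (j : nat) (n : nat) : nat :=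
  match j with
  | 0 => n
  | j'.+1 => \max_(0 <= m < n.+1) (m * fF j' (n.+1 - m) + m + fF j' (n - m))
  end.

(* f_k for k >= 1 *)
Definition f (k n : nat) : nat := fF k.-1 n.

From mathcomp Require Import all_boot zify.
From Stdlib Require Import Classical.
Set Implicit Arguments. Unset Strict Implicit. Unset Printing Implicit Defensive.

(* Two facts about Simon's congruence ~_n carry the proof, with m = f_k(n).

   First, every word over k letters that is longer than m has a letter whose
   deletion preserves its ~_n-class. Factor a word w without such a letter into
   arches (shortest factors containing every letter) followed by a tail that
   misses some letter. If there are j arches then j <= n, each arch minus its
   last letter avoids that letter, and the tail avoids a letter; since the
   prefix and suffix around a piece are rich enough, a ~_(n+1-j)-preserving
   deletion inside an arch (or ~_(n-j)-preserving one inside the tail) would be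
   ~_n-preserving in w. Induction on the alphabet bounds each piece by f_(k-1),
   which is the recursion defining f_k.

   Second, let u and v be incomparable, u ~_(m+1) u', and C the ~_n-class of v.
   A member of C of length <= m that is not a subword of u is also incomparable
   with u'. Otherwise suppose every member of C is comparable with u'. By
   pumping C has arbitrarily long members, so u' lies between a short and a
   long member of C and belongs to C by convexity; being comparable with all of
   C, it is the only member of C of its length. Deleting and pumping letters
   propagates this uniqueness to every length > m, so the long members of C
   form a chain; but u and v are incomparable long members of C. *)

Section Words.
Variable T : eqType.
Implicit Types s x y : seq T.

Lemma cat_injr s : injective (cat s).
Proof. by elim: s => // a s IH x y [] /IH. Qed.

Lemma cat_injl s : injective (cat^~ s).
Proof. by move=> x y /(congr1 rev); rewrite !rev_cat => /cat_injr /(can_inj revK). Qed.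

Lemma cat_levi x1 y1 x2 y2 : x1 ++ y1 = x2 ++ y2 ->
  exists s, (x2 = x1 ++ s /\ y1 = s ++ y2) \/ (x1 = x2 ++ s /\ y2 = s ++ y1).
Proof.
elim: x1 x2 => [|a x1 IH] [|b x2] /=.
- by move=> ->; exists [::]; left.
- by move=> ->; exists (b :: x2); left.
- by move=> <-; exists (a :: x1); right.
by case=> -> /IH [s [[-> ->]|[-> ->]]]; exists s; [left|right].
Qed.

Lemma all_subseq (p : pred T) s x : subseq s x -> all p x -> all p s.
Proof. by case/subseqP=> m _ ->; apply: all_mask. Qed.

Lemma subseq_size_eq s x : subseq s x -> size s = size x -> s = x.
Proof. by move=> /size_subseq_leqif[_ eq_sx] /eqP; rewrite eq_sx => /eqP. Qed.

Lemma subseq_delete x y c : subseq (x ++ y) (x ++ c :: y).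
Proof. by rewrite subseq_cat2l subseq_cons. Qed.

Lemma subseq_catP s x y : subseq s (x ++ y) ->
  exists s1 s2, [/\ s = s1 ++ s2, subseq s1 x & subseq s2 y].
Proof.
case/subseqP=> m sz_m ->.
exists (mask (take (size x) m) x), (mask (drop (size x) m) y).
by rewrite -mask_cat ?cat_take_drop ?mask_subseq // size_takel // sz_m size_cat leq_addr.
Qed.

Lemma subseq_cons_inv s x c : subseq s (c :: x) ->
  subseq s x \/ exists2 s', s = c :: s' & subseq s' x.
Proof.
case: s => [|d s] /=; first by left; apply: sub0seq.
by case: eqP => [->|_]; [right; exists s | left].
Qed.

Lemma subseq_rcons_inv s x c : subseq s (rcons x c) ->
  subseq s x \/ exists2 s', s = rcons s' c & subseq s' x.
Proof.
rewrite -subseq_rev rev_rcons => /subseq_cons_inv[sub_s|[s' def_s sub_s']].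
  by left; rewrite -subseq_rev.
right; exists (rev s'); last by rewrite -subseq_rev !revK.
by rewrite -rev_cons -def_s revK.
Qed.

Lemma subseq_cat_letter s1 s2 x y c : subseq (s1 ++ c :: s2) (x ++ y) ->
  subseq (rcons s1 c) x \/ subseq (c :: s2) y.
Proof.
case/subseq_catP=> t1 [t2 [/cat_levi[r [[-> def_t2]|[-> ->]]] sub1 sub2]].
- case: r def_t2 sub1 => [|d r] /=; first by move=> ->; right.
  case=> <- _ sub1; left; apply: subseq_trans sub1.
  by rewrite -cat_rcons prefix_subseq.
- by right; apply: subseq_trans sub2; apply: suffix_subseq.
Qed.

Lemma cons_cat_dup c d x y : c :: x ++ d :: y = x ++ d :: d :: y ->
  x ++ d :: y = c :: x ++ y.
Proof. by elim: x => [|e x IH] /=; [case=> -> | case=> <- /IH ->]. Qed.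

Lemma cat_del_dup x1 y1 x2 y2 (c1 c2 : T) :
  x1 ++ c1 :: y1 = x2 ++ c2 :: y2 ->
  x1 ++ c1 :: c1 :: y1 = x2 ++ c2 :: c2 :: y2 ->
  x1 ++ y1 = x2 ++ y2.
Proof.
elim: x1 x2 => [|a x1 IH] [|b x2] /=.
- by case=> _ ->.
- by case=> <- -> [/cons_cat_dup].
- by case=> -> <- [/esym /cons_cat_dup ->].
by case=> <- eq1 [/(IH _ eq1) ->].
Qed.

End Words.

Section Simon.
Variable A : eqType.
Implicit Types s t u v w x y : seq A.

Lemma simn_subseq n u v s : simn n u v -> size s <= n -> subseq s u = subseq s v.
Proof. by move/(_ s). Qed.

Lemma simn_refl n u : simn n u u.
Proof. by []. Qed.

Lemma simn_sym n u v : simn n u v -> simn n v u.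
Proof. by move=> sim_uv s le_sn; rewrite sim_uv. Qed.

Lemma simn_trans n u v w : simn n u v -> simn n v w -> simn n u w.
Proof. by move=> sim_uv sim_vw s le_sn; rewrite sim_uv // sim_vw. Qed.

Lemma simn0 u v : simn 0 u v.
Proof. by case=> // _; rewrite /subword !sub0seq. Qed.

Lemma simn_le m n u v : m <= n -> simn n u v -> simn m u v.
Proof. by move=> le_mn sim_uv s le_sm; apply/sim_uv/(leq_trans le_sm). Qed.

Lemma simn_between n u v w : subseq u v -> subseq v w -> simn n u w -> simn n v w.
Proof.
move=> sub_uv sub_vw sim_uw s le_sn; apply/idP/idP => [s_v|s_w].
  exact: subseq_trans s_v sub_vw.
by apply: subseq_trans sub_uv; rewrite (simn_subseq sim_uw).
Qed.

Lemma simn_short_eq n u v : size u < n -> simn n u v -> u = v.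
Proof.
move=> lt_un sim_uv.
have sub_uv : subseq u v by rewrite -(simn_subseq sim_uv) // ltnW.
have [le_vu|lt_uv] := leqP (size v) (size u).
  by apply: (subseq_size_eq sub_uv); apply/anti_leq; rewrite size_subseq.
set t := take (size u).+1 v; have size_t : size t = (size u).+1 by rewrite size_takel.
have : subseq t u by rewrite (simn_subseq sim_uv) ?size_t // take_subseq.
by move/size_subseq; rewrite size_t ltnn.
Qed.

Lemma simn_rcons n u v c : simn n u v -> simn n (rcons u c) (rcons v c).
Proof.
have sub u' v' : simn n u' v' -> forall s, size s <= n ->
    subseq s (rcons u' c) -> subseq s (rcons v' c).
  move=> sim s le_sn /subseq_rcons_inv[sub_s|[s' def_s sub_s']].
    by apply: subseq_trans (subseq_rcons v' c); rewrite -(simn_subseq sim).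
  move: le_sn; rewrite def_s size_rcons -!cats1 => lt_s'n.
  by rewrite cat_subseq // -(simn_subseq sim) // ltnW.
by move=> sim s le_sn; apply/idP/idP; apply: sub => //; apply: simn_sym.
Qed.

Lemma simn_pump n x y c : simn n (x ++ y) (x ++ c :: y) ->
  simn n (x ++ c :: c :: y) (x ++ c :: y).
Proof.
move=> sim s le_sn; apply/idP/idP => [|sub_s]; last first.
  by apply: subseq_trans sub_s _; rewrite subseq_cat2l subseq_cons.
rewrite -cat_rcons => /subseq_catP[s1 [s2 [def_s sub1 sub2]]]; subst s.
have [s1x|[s1' def_s1 sub1']] := subseq_rcons_inv sub1; first exact: cat_subseq.
have [s2y|[s2' def_s2 sub2']] := subseq_cons_inv sub2.
  by rewrite -cat_rcons; apply: cat_subseq.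
subst s1 s2; have : subseq (s1' ++ c :: s2') (x ++ c :: y).
  by apply: cat_subseq => //=; rewrite eqxx.
rewrite -(simn_subseq sim); last by move: le_sn; rewrite !size_cat size_rcons /=; lia.
case/subseq_cat_letter=> sub; first exact: cat_subseq.
by rewrite -[x ++ _]cat_rcons; apply: cat_subseq.
Qed.

Definition letter_deletable n w := exists x c y, w = x ++ c :: y /\ simn n (x ++ y) w.

Definition simn_reduced n P w :=
  forall x c y, w = x ++ c :: y -> ~ simn n (P ++ x ++ y) (P ++ w).

Lemma simn_reduced_cat n P x w : simn_reduced n P (x ++ w) -> simn_reduced n (P ++ x) w.
Proof.
move=> red y c z def_w; rewrite -!catA.
by have := red (x ++ y) c z; rewrite def_w -!catA; apply.
Qed.

End Simon.

Section Rich.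
Variable A : finType.
Implicit Types (S : {set A}) (s w x y P Q X : seq A).

Definition rich S i P := forall s, all [in S] s -> size s <= i -> subseq s P.

Lemma rich0 S P : rich S 0 P.
Proof. by case=> // _ _; apply: sub0seq. Qed.

Lemma rich1 S w : S \subset w -> rich S 1 w.
Proof.
move=> /subsetP S_w [|a [|b s]] //= aS _; first exact: sub0seq.
by rewrite sub1seq S_w //; move: aS; rewrite andbT.
Qed.

Lemma rich_cat S i j P Q : rich S i P -> rich S j Q -> rich S (i + j) (P ++ Q).
Proof.
move=> richP richQ s Ss le_s.
have /andP[S1 S2] : all [in S] (take i s) && all [in S] (drop i s).
  by rewrite -all_cat cat_take_drop.
rewrite -(cat_take_drop i s); apply: cat_subseq; [apply: richP | apply: richQ] => //.
  by rewrite size_take_min geq_minl.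
by rewrite size_drop leq_subLR.
Qed.

(* A subword of [P ++ X ++ Q] of length <= n can be re-cut so that its middle
   part has length <= r, by moving letters into the rich ends. *)
Lemma simn_rich_context S i j r n P X X' Q :
  rich S i P -> rich S j Q -> all [in S] (P ++ X ++ Q) ->
  subseq X' X -> simn r X' X -> n <= i + j + r ->
  simn n (P ++ X' ++ Q) (P ++ X ++ Q).
Proof.
move=> richP richQ; rewrite !all_cat => /and3P[SP SX SQ] sub_X sim_X le_n s le_sn.
rewrite /subword; apply/idP/idP => [|].
  by move/subseq_trans; apply; rewrite subseq_cat2l subseq_cat2r.
case/subseq_catP=> s1 [s23 [def_s s1P /subseq_catP[s2 [s3 [def_s23 s2X s3Q]]]]].
subst s s23; move: le_sn; have [k] := ubnP (size s2).
elim: k s1 s2 s3 s1P s2X s3Q => // k IH s1 s2 s3 s1P s2X s3Q; rewrite ltnS => le_s2k le_sn.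
have [short|long] := leqP (size s2) r.
  by do 2!apply: cat_subseq => //; rewrite (simn_subseq sim_X).
have S1 : all [in S] s1 := all_subseq s1P SP.
have [lt_s1i|ge_s1i] := ltnP (size s1) i.
  case: s2 => [|c s2] in s2X long le_s2k le_sn *; first by [].
  have cS : c \in S by have := all_subseq s2X SX; case/andP.
  rewrite /= -cat_rcons; apply: IH => //.
  - by apply: richP; rewrite ?all_rcons ?cS ?size_rcons.
  - exact: cons_subseq s2X.
  - by rewrite cat_rcons.
case/lastP: s2 => [|s2 c] in s2X long le_s2k le_sn *; first by [].
have cS : c \in S by have := all_subseq s2X SX; rewrite all_rcons; case/andP.
have lt_s3j : size s3 < j.
  by move: le_sn long; rewrite !size_cat size_rcons; clear -le_n ge_s1i; lia.
rewrite cat_rcons; apply: IH.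
- exact: s1P.
- by apply: subseq_trans s2X; apply: subseq_rcons.
- by apply: richQ; rewrite /= ?cS ?(all_subseq s3Q SQ).
- by rewrite -(size_rcons s2 c).
- by rewrite -cat_rcons.
Qed.

Lemma first_arch S w : all [in S] w -> S \subset w -> w != [::] ->
  exists w1 a w2, [/\ w = w1 ++ a :: w2, a \in S, a \notin w1 & S \subset rcons w1 a].
Proof.
elim/last_ind: w => [|w x IH] //; rewrite all_rcons => /andP[xS Sw] S_wx _.
have [S_w|/subsetPn[b bS bw]] := boolP (S \subset w).
  have w_nil : w != [::] by apply: contraTneq S_w => ->; apply/subsetPn; exists x.
  have [w1 [a [w2 [-> aS aw1 S_w1a]]]] := IH Sw S_w w_nil.
  by exists w1, a, (rcons w2 x); rewrite rcons_cat.
exists w, x, [::]; rewrite cats1; split=> //.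
by move: (subsetP S_wx b bS); rewrite mem_rcons inE (negPf bw) orbF => /eqP <-.
Qed.

End Rich.

Section ArchBound.
Variable A : finType.
Implicit Types (S : {set A}) (w x y P : seq A).

Variables (h : nat -> nat) (k : nat).
Hypothesis deletable_small : forall S r w,
  #|S| <= k -> all [in S] w -> h r < size w -> letter_deletable r w.
Variables (S : {set A}) (n : nat).
Hypothesis card_S : #|S| <= k.+1.

Lemma deletable_missing a r w :
  a \in S -> a \notin w -> all [in S] w -> h r < size w -> letter_deletable r w.
Proof.
move=> aS aw Sw; apply: (deletable_small (S := S :\ a)).
  by move: card_S; rewrite (cardsD1 a S) aS.
by apply/allP=> b bw; rewrite in_setD1 (allP Sw) // andbT; apply: contraNneq aw => <-.
Qed.

Lemma arch_tail P w i : rich S i P -> all [in S] (P ++ w) -> simn_reduced n P w ->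
  ~~ (S \subset w) -> size w <= h (n - i).
Proof.
move=> richP; rewrite all_cat => /andP[SP Sw] red_w /subsetPn[a aS aw].
rewrite leqNgt; apply/negP => /(deletable_missing aS aw Sw)[x [c [y [def_w sim]]]].
apply: (red_w x c y def_w).
suff: simn n (P ++ (x ++ y) ++ [::]) (P ++ w ++ [::]) by rewrite !cats0.
refine (simn_rich_context richP (rich0 [::]) _ _ sim _).
- by rewrite cats0 all_cat SP.
- by rewrite def_w subseq_delete.
- lia.
Qed.

(* [m - i] arches of length <= [h (n.+1 - m)].+1 each, then a short tail. *)
Lemma arch_bound w P i : i <= n -> rich S i P -> all [in S] (P ++ w) -> simn_reduced n P w ->
  exists m, [/\ i <= m <= n, rich S (m - i) w &
                size w <= (m - i) * (h (n.+1 - m)).+1 + h (n - m)].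
Proof.
have [l] := ubnP (size w); elim: l w P i => // l IH w P i.
rewrite ltnS => le_wl le_in richP S_Pw red_w.
have [/andP[w_nil S_w]|no_arch] := boolP ((w != [::]) && (S \subset w)); last first.
  exists i; rewrite leqnn le_in subnn; split=> //; first exact: rich0.
  have [->//|w_nil] := eqVneq w [::].
  by apply: arch_tail S_Pw red_w _; rewrite w_nil in no_arch.
have [SP Sw] : all [in S] P /\ all [in S] w by apply/andP; rewrite -all_cat.
have [w1 [a [w2 [def_w aS aw1 S_w1a]]]] := first_arch Sw S_w w_nil.
have S_ctx : all [in S] (P ++ rcons w1 a ++ w2) by rewrite cat_rcons -def_w.
have [lt_in|le_ni] := ltnP i n; last first.
  exfalso; apply: (red_w w1 a w2 def_w); rewrite def_w -cat_rcons.
  refine (simn_rich_context richP (rich0 w2) S_ctx (subseq_rcons w1 a) (simn0 _ _) _).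
  by rewrite !addn0.
have [m [/andP[lt_im le_mn] rich_w2 size_w2]] :
    exists m, [/\ i < m <= n, rich S (m - i.+1) w2 &
      size w2 <= (m - i.+1) * (h (n.+1 - m)).+1 + h (n - m)].
  apply: IH => //.
  - by apply: leq_trans le_wl; rewrite def_w size_cat /= addnS ltnS leq_addl.
  - by rewrite -addn1; apply: rich_cat richP (rich1 S_w1a).
  - by rewrite -catA.
  - by apply: simn_reduced_cat; rewrite cat_rcons -def_w.
have size_w1 : size w1 <= h (n.+1 - m).
  have Sw1 : all [in S] w1 by move: Sw; rewrite def_w all_cat => /andP[].
  rewrite leqNgt; apply/negP => /(deletable_missing aS aw1 Sw1)[x [c [y [def_w1 sim]]]].
  apply: (red_w x c (y ++ a :: w2)); first by rewrite def_w def_w1 -catA.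
  rewrite (catA x y) -cat_rcons def_w -[w1 ++ _]cat_rcons.
  refine (simn_rich_context richP rich_w2 S_ctx _ (simn_rcons a sim) _).
    by rewrite -!cats1 subseq_cat2r def_w1 subseq_delete.
  by clear -lt_im le_mn; lia.
have m_i : m - i = (m - i.+1).+1 by rewrite subnSK.
exists m; rewrite ?(ltnW lt_im) ?le_mn ?m_i; split=> //.
  by rewrite def_w -cat_rcons -add1n; apply: rich_cat (rich1 S_w1a) rich_w2.
rewrite def_w size_cat /= mulSn addnS -addSn -addnA.
exact: leq_add.
Qed.

Lemma arch_deletable w : all [in S] w ->
  \max_(0 <= m < n.+1) (m * h (n.+1 - m) + m + h (n - m)) < size w -> letter_deletable n w.
Proof.
move=> Sw long; apply: NNPP => not_del.
have red_w : simn_reduced n [::] w by move=> x c y def_w sim; apply: not_del; exists x, c, y.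
have [m [/andP[_ le_mn] _ size_w]] := arch_bound (leq0n n) (rich0 [::]) Sw red_w.
move: long; rewrite ltnNge => /negP; apply; apply: leq_trans size_w _.
rewrite subn0 mulnSr.
apply: (@leq_bigmax_seq _ _ xpredT (fun m => m * h (n.+1 - m) + m + h (n - m))) => //.
by rewrite mem_index_iota ltnS le_mn.
Qed.

End ArchBound.

Lemma fF_deletable (A : finType) j (S : {set A}) r (w : seq A) :
  #|S| <= j.+1 -> all [in S] w -> fF j r < size w -> letter_deletable r w.
Proof.
elim: j S r w => [|j IH] S r w card_S Sw long; last exact: (arch_deletable IH card_S Sw).
(* [fF 0] is the bound of [arch_deletable] for [h = 0] over the empty alphabet. *)
apply: (arch_deletable (h := fun=> 0) (k := 0) _ card_S Sw).
  move=> S' r' [|b w'] //; rewrite leqn0 cards_eq0 => /eqP-> /=.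
  by rewrite in_set0.
apply: leq_ltn_trans long; apply/bigmax_leqP_seq => m.
by rewrite mem_index_iota muln0 addn0 => /andP[_ lt_mr].
Qed.

Lemma fF_ge j n : n <= fF j n.
Proof.
elim: j n => [|j IH] n //=; apply: leq_trans (IH n) _.
have := @leq_bigmax_seq _ (index_iota 0 n.+1) xpredT
  (fun m => m * fF j (n.+1 - m) + m + fF j (n - m)) 0.
by rewrite mem_index_iota /= mul0n add0n !subn0 => /(_ isT isT).
Qed.

Section LongWords.
Variable A : eqType.
Implicit Types t u w x y z : seq A.
Variables n F : nat.
Hypothesis long_deletable : forall w, F < size w -> letter_deletable n w.

Lemma simn_shrink w l : F <= l -> l <= size w ->
  exists w', [/\ subseq w' w, simn n w' w & size w' = l].
Proof.
move=> le_Fl; have [m] := ubnP (size w); elim: m w => // m IH w.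
rewrite ltnS => le_wm; rewrite leq_eqVlt => /predU1P[->|lt_lw]; first by exists w.
have [x [c [y [def_w sim]]]] := long_deletable (leq_ltn_trans le_Fl lt_lw).
have size_w : size w = (size (x ++ y)).+1 by rewrite def_w !size_cat addnS.
have lt_xy_m : size (x ++ y) < m by rewrite -size_w.
have le_l_xy : l <= size (x ++ y) by rewrite -ltnS -size_w.
have [w' [sub_w' sim_w' size_w']] := IH _ lt_xy_m le_l_xy.
exists w'; split=> //; last exact: simn_trans sim_w' sim.
by apply: subseq_trans sub_w' _; rewrite def_w subseq_delete.
Qed.

Lemma simn_grow w p : F < size w -> exists z, simn n z w /\ size w + p <= size z.
Proof.
move=> long_w; elim: p => [|p [z [sim_zw le_z]]]; first by exists w; rewrite addn0.
have [x [c [y [def_z sim]]]] := long_deletable (leq_trans long_w (leq_trans (leq_addr _ _) le_z)).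
exists (x ++ c :: c :: y); split.
  by apply: simn_trans sim_zw; rewrite def_z; apply: simn_pump; rewrite -def_z.
by move: le_z; rewrite def_z !size_cat /=; lia.
Qed.

Variable v : seq A.
Let C t := simn n t v.

Lemma class_delete w : C w -> F < size w -> exists x c y, w = x ++ c :: y /\ C (x ++ y).
Proof.
move=> Cw /long_deletable[x [c [y [def_w sim]]]].
by exists x, c, y; split=> //; apply: simn_trans sim Cw.
Qed.

Lemma class_pump x c y : C (x ++ y) -> C (x ++ c :: y) -> C (x ++ c :: c :: y).
Proof.
by move=> C1 C2; apply: simn_trans (simn_pump (simn_trans C1 (simn_sym C2))) C2.
Qed.

Lemma class_between t w z : subseq t w -> subseq w z -> C t -> C z -> C w.
Proof.
move=> sub_tw sub_wz Ct Cz.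
exact: simn_trans (simn_between sub_tw sub_wz (simn_trans Ct (simn_sym Cz))) Cz.
Qed.

Definition unique_length l :=
  forall w1 w2, C w1 -> C w2 -> size w1 = l -> size w2 = l -> w1 = w2.

Lemma class_insert E x c y : F < size E -> E = x ++ c :: y -> C (x ++ y) -> C E ->
  unique_length (size E) ->
  forall w, C w -> size w = (size E).+1 -> w = x ++ c :: c :: y.
Proof.
move=> long_E def_E Cxy CE uniqE w Cw size_w.
have [x' [d [y' [def_w Cxy']]]] : exists x' d y', w = x' ++ d :: y' /\ C (x' ++ y').
  by apply: class_delete; rewrite // size_w ltnS ltnW.
have eq_E : x' ++ y' = E.
  by apply: (uniqE _ _ Cxy' CE) => //; move: size_w; rewrite def_w !size_cat /= addnS => -[].
have left_case s : x = x' ++ s -> y' = s ++ c :: y -> w = x ++ c :: c :: y.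
  move=> def_x def_y'.
  have Cb : C (x' ++ d :: s ++ y).
    apply: class_between Cxy Cw; first by rewrite def_x -catA subseq_cat2l subseq_cons.
    by rewrite def_w def_y' subseq_cat2l /= eqxx subseq_delete.
  have eq_b : x' ++ d :: s ++ y = E.
    by apply: (uniqE _ _ Cb CE) => //; rewrite -eq_E def_y' !size_cat /= size_cat; lia.
  have eq_ds : d :: s = rcons s c.
    apply: (@cat_injl _ y); apply: (@cat_injr _ x') => /=.
    by rewrite eq_b cat_rcons catA -def_x -def_E.
  by rewrite def_w def_y' -cat_cons eq_ds cat_rcons def_x -catA.
rewrite def_E in eq_E; have [s [[def_x def_y']|[def_x' def_cy]]] := cat_levi eq_E.
  exact: left_case def_x def_y'.
case: s def_x' def_cy => [|c' s] def_x' /=.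
  by move=> def_y'; apply: (left_case [::]); rewrite -?def_y' // def_x' !cats0.
case=> eq_c def_y; rewrite -eq_c in def_x'.
have Cb : C (x ++ s ++ d :: y').
  apply: class_between Cxy Cw; first by rewrite def_y subseq_cat2l subseq_delete.
  by rewrite def_w def_x' -catA subseq_cat2l subseq_cons.
have eq_b : x ++ s ++ d :: y' = E.
  by apply: (uniqE _ _ Cb CE) => //; rewrite def_E def_y !size_cat /= !size_cat; lia.
have eq_sd : rcons s d = c :: s.
  apply: (@cat_injl _ y'); apply: (@cat_injr _ x) => /=.
  by rewrite cat_rcons eq_b def_E def_y.
by rewrite def_w def_x' -catA /= -[s ++ _]cat_rcons eq_sd def_y.
Qed.

Lemma unique_length_succ l : F < l -> unique_length l -> unique_length l.+1.
Proof.
move=> lt_Fl uniq_l w1 w2 Cw1 Cw2 size1 size2.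
have long1 : F < size w1 by rewrite size1 ltnW.
have [x1 [d1 [y1 [def_w1 C1]]]] := class_delete Cw1 long1.
have size_E : size (x1 ++ y1) = l by move: size1; rewrite def_w1 !size_cat addnS => -[].
have long_E : F < size (x1 ++ y1) by rewrite size_E.
have uniq_E : unique_length (size (x1 ++ y1)) by rewrite size_E.
have [x [c [y [def_E Cxy]]]] := class_delete C1 long_E.
have insert w : C w -> size w = l.+1 -> w = x ++ c :: c :: y.
  by move=> Cw size_w; apply: (class_insert long_E def_E Cxy C1 uniq_E Cw); rewrite size_E.
by rewrite (insert w1 Cw1 size1) (insert w2 Cw2 size2).
Qed.

(* A word is determined by its first and second pumpings at a letter. *)
Lemma unique_length_pred l : F < l -> unique_length l.+1 -> unique_length l.+2 ->
  unique_length l.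
Proof.
move=> lt_Fl uniq1 uniq2.
have pump2 w : C w -> size w = l -> exists x c y,
    [/\ w = x ++ c :: y, C (x ++ c :: c :: y) & C (x ++ c :: c :: c :: y)].
  move=> Cw size_w; have long_w : F < size w by rewrite size_w.
  have [x [c [y [def_w Cxy]]]] := class_delete Cw long_w.
  have C2 : C (x ++ c :: c :: y) by apply: class_pump => //; rewrite -def_w.
  by exists x, c, y; split=> //; rewrite -cat_rcons; apply: class_pump; rewrite cat_rcons -?def_w.
move=> w1 w2 Cw1 Cw2 size1 size2.
have [x1 [c1 [y1 [def1 C1 C1']]]] := pump2 _ Cw1 size1.
have [x2 [c2 [y2 [def2 C2 C2']]]] := pump2 _ Cw2 size2.
rewrite def1 def2 -!cat_rcons; apply: (@cat_del_dup _ _ _ _ _ c1 c2); rewrite !cat_rcons.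
  by apply: uniq1; rewrite // !size_cat /=; move: size1 size2; rewrite def1 def2 !size_cat /=; lia.
by apply: uniq2; rewrite // !size_cat /=; move: size1 size2; rewrite def1 def2 !size_cat /=; lia.
Qed.

Lemma unique_length_gt l0 : F < l0 -> unique_length l0 -> forall l, F < l -> unique_length l.
Proof.
move=> lt_Fl0 uniq0.
have up d : unique_length (l0 + d).
  elim: d => [|d IH]; first by rewrite addn0.
  by rewrite addnS; apply: unique_length_succ IH; apply: ltn_addr.
have down d l : F < l -> l0 <= l + d -> unique_length l.
  elim: d l => [|d IH] l lt_Fl; first by rewrite addn0 => /subnKC <-.
  by move=> le_l0; apply: unique_length_pred (IH _ _ _) (IH _ _ _); rewrite // ?addSnnS; lia.
by move=> l lt_Fl; apply: (down l0 l lt_Fl); rewrite leq_addl.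
Qed.

Lemma class_chain u0 : C u0 -> F < size u0 -> (forall t, C t -> subseq t u0 || subseq u0 t) ->
  forall t1 t2, C t1 -> C t2 -> F < size t1 -> size t1 <= size t2 -> subseq t1 t2.
Proof.
move=> Cu0 long_u0 cmp.
have uniq_u0 : unique_length (size u0).
  have eq_u0 t : C t -> size t = size u0 -> t = u0.
    move=> Ct size_t; case/orP: (cmp t Ct) => [t_u0|u0_t]; first exact: subseq_size_eq.
    exact/esym/subseq_size_eq.
  by move=> w1 w2 C1 C2 /(eq_u0 _ C1) -> /(eq_u0 _ C2) ->.
move=> t1 t2 Ct1 Ct2 long_t1 le_12.
have [t [sub_t sim_t size_t]] := simn_shrink (ltnW long_t1) le_12.
have Ct : C t := simn_trans sim_t Ct2.
by rewrite -(unique_length_gt long_u0 uniq_u0 long_t1 Ct Ct1 size_t).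
Qed.

Lemma comparable_mem_class u0 m : F < size v -> C m -> subseq m u0 ->
  (forall t, C t -> subseq t u0 || subseq u0 t) -> C u0.
Proof.
move=> long_v Cm m_u0 cmp; have [z [Cz size_z]] := simn_grow (size u0) long_v.
have lt_u0z : size u0 < size z by lia.
have u0_z : subseq u0 z by case/orP: (cmp z Cz) => // /size_subseq; rewrite leqNgt lt_u0z.
exact: class_between m_u0 u0_z Cm Cz.
Qed.

Lemma incomparable_transfer u u' : n <= F.+1 -> simn F.+1 u u' -> incomparable u v ->
  exists v', C v' /\ incomparable u' v'.
Proof.
move=> le_nF sim_uu' [not_uv not_vu].
have [short_u|long_u] := leqP (size u) F.
  by exists v; rewrite -(simn_short_eq _ sim_uu') ?ltnS.
have long_u' : F < size u'.
  rewrite ltnNge; apply: contraL long_u => short_u'.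
  by rewrite -(simn_short_eq _ (simn_sym sim_uu')) -?leqNgt ?ltnS.
have [[t [Ct short_t t_u]]|no_short] :=
  classic (exists t, [/\ C t, size t <= F & ~~ subseq t u]).
  exists t; split=> //; split.
    by apply/negP => /size_subseq; rewrite leqNgt (leq_ltn_trans short_t long_u').
  by rewrite /subword -(simn_subseq sim_uu') // ltnW.
have sub_short t : C t -> size t <= F -> subseq t u.
  by move=> Ct short_t; apply/negPn/negP => t_u; apply: no_short; exists t.
apply: NNPP => no_v'.
have cmp t : C t -> subseq t u' || subseq u' t.
  move=> Ct; apply/negPn/negP; rewrite negb_or => /andP[t_u' u'_t].
  by apply: no_v'; exists t.
have Cv : C v := simn_refl v.
have long_v : F < size v by rewrite ltnNge; apply: contra not_vu; apply: sub_short.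
have [m [_ Cm size_m]] := simn_shrink (leqnn F) (ltnW long_v).
have m_u' : subseq m u' by rewrite -(simn_subseq sim_uu') ?size_m // sub_short ?size_m.
have Cu' : C u' := comparable_mem_class long_v Cm m_u' cmp.
have Cu : C u := simn_trans (simn_le le_nF sim_uu') Cu'.
have chain := class_chain Cu' long_u' cmp.
have [le_uv|/ltnW le_vu] := leqP (size u) (size v).
  by move: not_uv; rewrite /subword (chain u v).
by move: not_vu; rewrite /subword (chain v u).
Qed.

End LongWords.

Theorem theorem20 (A : finType) (k n : nat) (L : seq A -> Prop) :
  #|A| = k -> 0 < k -> nPT n L -> nPT (f k n).+1 (Iset L).
Proof.
move=> card_A k_gt0 L_PT.
have long_deletable (w : seq A) : f k n < size w -> letter_deletable n w.
  apply: (fF_deletable (S := [set: A])); first by rewrite cardsT card_A (prednK k_gt0).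
  by apply/allP => a; rewrite in_setT.
have le_n : n <= (f k n).+1 by apply/leqW/fF_ge.
have transfer u u' : simn (f k n).+1 u u' -> Iset L u -> Iset L u'.
  move=> sim_uu' [v [Lv inc_uv]].
  have [v' [sim_v' inc_u'v']] := incomparable_transfer long_deletable le_n sim_uu' inc_uv.
  by exists v'; split=> //; apply/(L_PT _ _ sim_v').
by move=> u u' sim_uu'; split; apply: transfer => //; apply: simn_sym.
Qed.
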